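(* Let $X$ be an exponential vector space over a field $K$, let $B$ be a basis of $X\smallsetminus X_0$ and let $x\in B$. Then for every $y\in X\smallsetminus X_0$ with $y\leq x$, the set $(B\smallsetminus\{x\})\cup\{y\}$ is also a basis of $X\smallsetminus X_0$.
   Context: An exponential vector space (evs) over a field $K$ is a partially ordered set $(X,\leq)$ with a binary operation $+$ on $X$ and a map $K\times X\to X$, $(\alpha,x)\mapsto \alpha x$, such that: (A1) $(X,+)$ is a commutative semigroup with identity $\theta$; (A2) $x\leq y$ implies $x+z\leq y+z$ and $\alpha x\leq \alpha y$ for all $z\in X$, $\alpha\in K$; (A3) $\alpha(x+y)=\alpha x+\alpha y$, $\alpha(\beta x)=(\alpha\beta)x$, $(\alpha+\beta)x\leq \alpha x+\beta x$, $1x=x$; (A4) $\alpha x=\theta$ iff $\alpha=0$ or $x=\theta$; (A5) $x+(-1)x=\theta$ iff $x\in X_0$, where $X_0:=\{z\in X: y\not\leq z \text{ for all } y\in X\smallsetminus\{z\}\}$ (the set of minimal elements, called the primitive space; it is a vector space over $K$); (A6) for each $x\in X$ there is $p\in X_0$ with $p\leq x$. For $x\in X\smallsetminus X_0$ let $L(x):=\{z\in X: z\geq \alpha x+p \text{ for some } \alpha\in K\smallsetminus\{0\},\ p\in X_0\}$. A subset $B\subseteq X\smallsetminus X_0$ generates $X\smallsetminus X_0$ if $X\smallsetminus X_0=\bigcup_{b\in B}L(b)$. Elements $x,y\in X\smallsetminus X_0$ are orderly dependent if $x\in L(y)$ or $y\in L(x)$, and orderly independent otherwise; $B\subseteq X\smallsetminus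 X_0$ is orderly independent if any two distinct members of $B$ are orderly independent. A basis of $X\smallsetminus X_0$ is an orderly independent subset of $X\smallsetminus X_0$ that generates $X\smallsetminus X_0$. *)

From mathcomp Require Import all_boot all_algebra.
Set Implicit Arguments. Unset Strict Implicit. Unset Printing Implicit Defensive.
Import GRing.Theory.
Local Open Scope ring_scope.

Section EVS.
Variables (K : fieldType) (X : Type) (le : X -> X -> Prop)
  (add : X -> X -> X) (sc : K -> X -> X) (th : X).

(* X_0 : the minimal elements (primitive space) *)
Definition primitive (z : X) : Prop := forall y : X, y <> z -> ~ le y z.

Record is_evs : Prop := {
  evs_refl : forall x, le x x;
  evs_antisym : forall x y, le x y -> le y x -> x = y;
  evs_trans : forall x y z, le x y -> le y z -> le x z;
  evs_addA : forall x y z, add x (add y z) = add (add x y) z;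
  evs_addC : forall x y, add x y = add y x;
  evs_add0 : forall x, add th x = x;
  evs_le_add : forall x y z, le x y -> le (add x z) (add y z);
  evs_le_sc : forall (a : K) x y, le x y -> le (sc a x) (sc a y);
  evs_scD : forall (a : K) x y, sc a (add x y) = add (sc a x) (sc a y);
  evs_scA : forall (a b : K) x, sc a (sc b x) = sc (a * b) x;
  evs_scDl : forall (a b : K) x, le (sc (a + b) x) (add (sc a x) (sc b x));
  evs_sc1 : forall x, sc 1 x = x;
  evs_sc_eq0 : forall (a : K) x, sc a x = th <-> (a = 0 \/ x = th);
  evs_A5 : forall x, add x (sc (-1) x) = th <-> primitive x;
  evs_A6 : forall x, exists p, primitive p /\ le p x
}.

Definition Lset (x z : X) : Prop :=
  exists (a : K) (p : X), a <> 0 /\ primitive p /\ le (add (sc a x) p) z.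

Definition generates (B : X -> Prop) : Prop :=
  (forall b, B b -> ~ primitive b) /\
  (forall z, ~ primitive z <-> exists b, B b /\ Lset b z).

Definition orderly_dependent (x y : X) : Prop := Lset y x \/ Lset x y.

Definition orderly_independent_set (B : X -> Prop) : Prop :=
  (forall b, B b -> ~ primitive b) /\
  (forall x y, B x -> B y -> x <> y -> ~ orderly_dependent x y).

Definition basis (B : X -> Prop) : Prop :=
  orderly_independent_set B /\ generates B.

End EVS.

From mathcomp Require Import all_boot all_algebra.
From Stdlib Require Import Classical.
Import GRing.Theory.
Local Open Scope ring_scope.
Set Implicit Arguments. Unset Strict Implicit.

(* If y <= x with y not primitive, then y lies in L(b) for some b of the
   basis; b = x, since otherwise x would lie in the upward closed set L(b).
   So y is in L(x), and together with y <= x this gives L(x) = L(y).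
   Two elements generating the same set L are interchangeable in a basis. *)

Section ExponentialVectorSpace.
Variables (K : fieldType) (X : Type) (le : X -> X -> Prop)
  (add : X -> X -> X) (sc : K -> X -> X) (th : X).
Hypothesis evs : is_evs le add sc th.

Lemma primitive_sc a q : primitive le q -> primitive le (sc a q).
Proof.
move=> Pq; apply/(evs_A5 evs).
have -> : sc (-1) (sc a q) = sc a (sc (-1) q) by rewrite !(evs_scA evs) mulrC.
rewrite -(evs_scD evs) (proj2 (evs_A5 evs q) Pq).
by apply/(evs_sc_eq0 evs); right.
Qed.

Lemma primitive_add p q :
  primitive le p -> primitive le q -> primitive le (add p q).
Proof.
move=> Pp Pq; apply/(evs_A5 evs); rewrite (evs_scD evs).
have -> : add (add p q) (add (sc (-1) p) (sc (-1) q)) =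
          add (add p (sc (-1) p)) (add q (sc (-1) q)).
  rewrite -!(evs_addA evs); congr (add p _).
  by rewrite !(evs_addA evs) (evs_addC evs q).
rewrite (proj2 (evs_A5 evs p) Pp) (proj2 (evs_A5 evs q) Pq).
exact: (evs_add0 evs).
Qed.

Lemma primitive_th : primitive le th.
Proof.
apply/(evs_A5 evs).
have -> : sc (-1) th = th by apply/(evs_sc_eq0 evs); right.
exact: (evs_add0 evs).
Qed.

Lemma Lset_refl x : Lset le add sc x x.
Proof.
exists 1, th; split; first exact/eqP/oner_neq0.
split; first exact: primitive_th.
by rewrite (evs_sc1 evs) (evs_addC evs) (evs_add0 evs); apply: (evs_refl evs).
Qed.

Lemma Lset_le b u z : Lset le add sc b u -> le u z -> Lset le add sc b z.
Proof.
move=> [a [p [a0 [Pp Lp]]]] uz; exists a, p; do 2!split=> //.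
exact: (evs_trans evs Lp uz).
Qed.

Lemma Lset_trans b u z :
  Lset le add sc b u -> Lset le add sc u z -> Lset le add sc b z.
Proof.
move=> [a' [q [a'0 [Pq Lq]]]] [a [p [a0 [Pp Lp]]]].
exists (a * a'), (add (sc a q) p); split; first by apply/eqP; rewrite mulf_neq0 //; apply/eqP.
split; first by apply: primitive_add => //; apply: primitive_sc.
apply: (evs_trans evs) Lp.
have := evs_le_add evs p (evs_le_sc evs a Lq).
by rewrite (evs_scD evs) (evs_scA evs) -(evs_addA evs).
Qed.

Lemma Lset_le_base y x z : le y x -> Lset le add sc x z -> Lset le add sc y z.
Proof.
move=> yx [a [p [a0 [Pp Lp]]]]; exists a, p; do 2!split=> //.
apply: (evs_trans evs) Lp; apply: (evs_le_add evs); exact: (evs_le_sc evs).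
Qed.

Lemma Lset_eq_of_le x y :
  Lset le add sc x y -> le y x ->
  forall z, Lset le add sc x z <-> Lset le add sc y z.
Proof.
move=> Lxy yx z; split; first exact: Lset_le_base.
exact: Lset_trans Lxy.
Qed.

Lemma basis_Lset_of_le B x y :
  basis le add sc B -> B x -> ~ primitive le y -> le y x -> Lset le add sc x y.
Proof.
move=> [[_ Bind] [_ Bgen]] Bx ny yx.
have [b [Bb Lby]] := proj1 (Bgen y) ny.
have [<- // | bx] := classic (b = x).
by case: (Bind b x Bb Bx bx); right; apply: Lset_le Lby yx.
Qed.

Lemma basis_exchange B x y :
  basis le add sc B -> B x ->
  (forall z, Lset le add sc x z <-> Lset le add sc y z) ->
  basis le add sc (fun z => (B z /\ z <> x) \/ z = y).
Proof.
move=> [[Bnp Bind] [_ Bgen]] Bx Lxy.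
have ny : ~ primitive le y.
  by apply/(Bgen y); exists x; split=> //; apply/Lxy/Lset_refl.
have indep_y w : B w -> w <> x -> ~ orderly_dependent le add sc w y.
  move=> Bw wx [Lyw | Lwy].
    by apply: (Bind x w Bx Bw (nesym wx)); right; apply/Lxy.
  apply: (Bind w x Bw Bx wx); right.
  by apply: Lset_trans Lwy _; apply/Lxy/Lset_refl.
have np w : (B w /\ w <> x) \/ w = y -> ~ primitive le w.
  by case=> [[Bw _] | ->]; [apply: Bnp |].
split; split=> //.
- move=> u v [[Bu ux] | ->] [[Bv vx] | ->] uv //.
  + exact: Bind.
  + exact: indep_y.
  + by move=> /or_comm; apply: indep_y Bv vx.
- move=> z; split.
  + move=> nz; have [b [Bb Lbz]] := proj1 (Bgen z) nz.
    have [bx | bx] := classic (b = x).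
      by exists y; split; [right | apply/Lxy; rewrite -bx].
    by exists b; split; first left.
  + move=> [b [[[Bb _] | ->] Lbz]]; apply/(Bgen z); first by exists b.
    by exists x; split=> //; apply/Lxy.
Qed.

End ExponentialVectorSpace.

Theorem mainTheorem4 (K : fieldType) (X : Type) (le : X -> X -> Prop)
  (add : X -> X -> X) (sc : K -> X -> X) (th : X) :
  is_evs le add sc th ->
  forall (B : X -> Prop), basis le add sc B ->
  forall x : X, B x ->
  forall y : X, ~ primitive le y -> le y x ->
  basis le add sc (fun z => (B z /\ z <> x) \/ z = y).
Proof.
move=> evs B basisB x Bx y ny yx.
apply: (basis_exchange evs basisB Bx).
apply: (Lset_eq_of_le evs _ yx).
exact: (basis_Lset_of_le evs basisB Bx ny yx).
Qed.
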